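(* Let $n,m,c$ be positive integers and $r,s,R,S$ nonnegative integers with $R\le n$, $S\le m$. Let $\alpha\in\mathrm{Par}(R,r)$, $\beta\in\mathrm{Par}(S,s)$, $\lambda\in\mathrm{Par}(n-R,c)$ and $\mu\in\mathrm{Par}(m-S,c)$. Then \[ X(q) = \frac{[(n-R)(m-S)]_q}{[c]_q} \begin{bmatrix}n\\ r\end{bmatrix}_q\begin{bmatrix}m\\ s\end{bmatrix}_q \begin{bmatrix}r\\ \alpha\end{bmatrix}_q \begin{bmatrix}s\\ \beta\end{bmatrix}_q \begin{bmatrix}c\\ \lambda\end{bmatrix}_q \begin{bmatrix}c\\ \mu\end{bmatrix}_q \] is a polynomial in $q$.
   Context: $\mathrm{Par}(N,k)$ is the set of integer partitions of $N$ with $k$ parts. Write $\lambda=(1^{m_1},2^{m_2},\dots)$ if $\lambda$ has $m_i$ parts equal to $i$. The $q$-notation is $[N]_q=(1-q^N)/(1-q)$, $[N]_q!=[1]_q\cdots[N]_q$, $\begin{bmatrix}N\\k\end{bmatrix}_q=\frac{[N]_q!}{[k]_q![N-k]_q!}$, and, for $\lambda$ with $k$ parts, $\begin{bmatrix}k\\ \lambda\end{bmatrix}_q=\frac{[k]_q!}{[m_1]_q![m_2]_q!\cdots}$. *)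

From HB Require Import structures.
From mathcomp Require Import all_boot all_order all_algebra.
From mathcomp Require Import fraction.
Set Implicit Arguments. Unset Strict Implicit. Unset Printing Implicit Defensive.
Import Order.TTheory GRing.Theory Num.Theory.
Local Open Scope ring_scope.

Definition is_par (N k : nat) (l : seq nat) : bool :=
  [&& sorted geq l, all (fun x => 0 < x)%N l, size l == k & sumn l == N].

(* [N]_q = 1 + q + ... + q^(N-1) = (1 - q^N)/(1 - q) as an integer polynomial *)
Definition qint (N : nat) : {poly int} := \sum_(i < N) 'X^i.

Definition qfact (N : nat) : {poly int} := \prod_(1 <= i < N.+1) qint i.

Notation qfrac := {fraction {poly int}}.
Notation "x %:F" := (@FracField.tofrac _ x) : ring_scope.

Definition qbinom (N k : nat) : qfrac :=
  (qfact N)%:F / ((qfact k)%:F * (qfact (N - k))%:F).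

(* q-multinomial [k; lambda]_q = [k]_q! / prod_i [m_i]_q!, where m_i is the
   multiplicity of the part i in lambda (parts with m_i = 0 contribute 1). *)
Definition qmultinom (k : nat) (l : seq nat) : qfrac :=
  (qfact k)%:F / \prod_(i <- undup l) (qfact (count_mem i l))%:F.

From HB Require Import structures.
From mathcomp Require Import all_boot all_order all_algebra.
From mathcomp Require Import fraction.
From mathcomp Require Import ring.
Import Order.TTheory GRing.Theory Num.Theory.
Local Open Scope ring_scope.

(* Every q-binomial and q-multinomial is a polynomial, so only the division by
   [c]_q needs care.  For each part i of lambda, [m_i]_q [c; lambda]_q / [c]_q is
   the q-multinomial with m_i lowered by one, hence a polynomial.  Since
   [a + b]_q = [a]_q + q^a [b]_q, the k for which [k]_q [c; lambda]_q / [c]_q is a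
   polynomial are closed under addition; so they include n - R = sum_i i m_i and
   its multiple (n - R)(m - S). *)

Lemma qint0 : qint 0 = 0.
Proof. by rewrite /qint big_ord0. Qed.

Lemma qintD a b : qint (a + b) = qint a + 'X^a * qint b.
Proof.
rewrite /qint big_split_ord /= mulr_sumr; congr (_ + _).
by apply: eq_bigr => i _; rewrite exprD.
Qed.

Lemma qint_eq0 k : (qint k == 0) = (k == 0%N).
Proof.
apply/idP/eqP => [/eqP/(congr1 (horner^~ 1))|->]; last by rewrite qint0.
rewrite /qint horner_sum hornerC.
under eq_bigr => i _ do rewrite hornerXn expr1n.
by rewrite sumr_const card_ord => /eqP; rewrite pnatr_eq0 => /eqP.
Qed.

Lemma qfactS k : qfact k.+1 = qfact k * qint k.+1.
Proof. by rewrite /qfact big_nat_recr. Qed.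

Lemma qfact_neq0 k : qfact k != 0.
Proof.
elim: k => [|k IH]; first by rewrite /qfact big_geq // oner_eq0.
by rewrite qfactS mulf_neq0 // qint_eq0.
Qed.

Lemma prod_qfact_neq0 (ms : seq nat) : \prod_(x <- ms) qfact x != 0.
Proof. by rewrite prodf_seq_neq0; apply/allP => i _; rewrite qfact_neq0. Qed.

Fixpoint gauss_poly (n k : nat) : {poly int} :=
  match n, k with
  | _, 0 => 1
  | 0, _.+1 => 0
  | n'.+1, k'.+1 => gauss_poly n' k' + 'X^(k'.+1) * gauss_poly n' k'.+1
  end.

Lemma gauss_poly_gt n k : (n < k)%N -> gauss_poly n k = 0.
Proof.
elim: n k => [|n IH] [|k] //= ltnk.
by rewrite !IH ?mulr0 ?addr0 // ltnW.
Qed.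

Lemma gauss_polyP {n k} : (k <= n)%N ->
  gauss_poly n k * qfact k * qfact (n - k) = qfact n.
Proof.
elim: n k => [|n IH] [|k] //=.
- by rewrite /qfact big_geq // !mulr1.
- by rewrite subn0 mul1r /qfact big_geq // mul1r.
move=> lekn; rewrite subSS (qfactS n).
have left_term :
    gauss_poly n k * qfact k.+1 * qfact (n - k) = qint k.+1 * qfact n.
  by rewrite -(IH _ lekn) qfactS; ring.
have right_term : 'X^(k.+1) * gauss_poly n k.+1 * qfact k.+1 * qfact (n - k)
                  = 'X^(k.+1) * qint (n - k) * qfact n.
  have [ltkn | lenk] := ltnP k n.
    by rewrite -(IH _ ltkn) -(subnSK ltkn) !qfactS; ring.
  have -> : k = n by apply/eqP; rewrite eqn_leq -ltnS lekn lenk.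
  by rewrite gauss_poly_gt // subnn qint0; ring.
have -> : n.+1 = (k.+1 + (n - k))%N by rewrite addSn subnKC.
by rewrite qintD !mulrDl left_term right_term; ring.
Qed.

Fixpoint multinom_poly (ms : seq nat) : {poly int} :=
  if ms is a :: ms' then gauss_poly (a + sumn ms') a * multinom_poly ms' else 1.

Lemma multinom_polyP ms :
  multinom_poly ms * \prod_(x <- ms) qfact x = qfact (sumn ms).
Proof.
elim: ms => [|a ms IH] /=; first by rewrite big_nil mulr1 /qfact big_geq.
by rewrite big_cons -(gauss_polyP (leq_addr (sumn ms) a)) addKn -IH; ring.
Qed.

Lemma tofrac_divp (A B P : {poly int}) : B != 0 -> A = P * B ->
  A%:F / B%:F = P%:F :> qfrac.
Proof. by move=> B0 ->; rewrite tofracM mulfK // tofrac_eq0. Qed.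

Lemma qbinomE {n k} : (k <= n)%N -> qbinom n k = (gauss_poly n k)%:F.
Proof.
move=> lekn; rewrite /qbinom -tofracM; apply: tofrac_divp.
  by rewrite mulf_neq0 // qfact_neq0.
by rewrite -(gauss_polyP lekn) mulrA.
Qed.

Definition mults (l : seq nat) : seq nat := [seq count_mem i l | i <- undup l].

Lemma sum_mults (l : seq nat) (F : nat -> nat) :
  (\sum_(i <- undup l) F i * count_mem i l = \sum_(i <- l) F i)%N.
Proof.
rewrite -[RHS]big_undup_iterop_count; apply: eq_bigr => i _.
by rewrite Monoid.iteropE iter_addn_0.
Qed.

Lemma sumn_mults l : sumn (mults l) = size l.
Proof.
rewrite sumnE big_map -[size l]count_predT -sum1_count.
by rewrite -(sum_mults l (fun=> 1%N)); apply: eq_bigr => i _; rewrite mul1n.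
Qed.

Lemma prod_qfact_mults l : \prod_(i <- undup l) (qfact (count_mem i l))%:F
  = (\prod_(x <- mults l) qfact x)%:F :> qfrac.
Proof. by rewrite rmorph_prod big_map. Qed.

Lemma qmultinomE {k l} :
  size l = k -> qmultinom k l = (multinom_poly (mults l))%:F.
Proof.
move=> <-; rewrite /qmultinom prod_qfact_mults.
apply: tofrac_divp; first exact: prod_qfact_neq0.
by rewrite multinom_polyP sumn_mults.
Qed.

Definition qpoly (X : qfrac) : Prop := exists P : {poly int}, X = P%:F.

Lemma qint_multinom_div (a : nat) (ms : seq nat) :
  (qint a.+1)%:F * ((qfact (a.+1 + sumn ms))%:F
     / (\prod_(x <- a.+1 :: ms) qfact x)%:F / (qint (a.+1 + sumn ms))%:F)
  = (multinom_poly (a :: ms))%:F.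
Proof.
rewrite -mulrA -invfM -tofracM mulrA -tofracM; apply: tofrac_divp.
  by rewrite mulf_neq0 ?prod_qfact_neq0 // qint_eq0 addSn.
rewrite addSn qfactS -(multinom_polyP (a :: ms)) !big_cons qfactS /=; ring.
Qed.

Lemma qpoly_qint_count_qmultinom (l : seq nat) j : j \in l ->
  qpoly ((qint (count_mem j l))%:F * (qmultinom (size l) l / (qint (size l))%:F)).
Proof.
move=> jl; have ju : j \in undup l by rewrite mem_undup.
set ms := [seq count_mem i l | i <- rem j (undup l)].
have mults_perm : perm_eq (mults l) (count_mem j l :: ms).
  exact: perm_map (perm_to_rem ju).
have : (0 < count_mem j l)%N by rewrite -has_count has_pred1.
case: (count_mem j l) mults_perm => [//|a] mults_perm _.
exists (multinom_poly (a :: ms)); rewrite -qint_multinom_div.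
rewrite -(sumn_mults l) (perm_sumn mults_perm) /qmultinom prod_qfact_mults.
by rewrite (perm_big _ mults_perm).
Qed.

Definition qint_clears (X : qfrac) (k : nat) : Prop := qpoly ((qint k)%:F * X).

Lemma qint_clears0 X : qint_clears X 0.
Proof. by exists 0; rewrite qint0 tofrac0 mul0r. Qed.

Lemma qint_clearsD X a b :
  qint_clears X a -> qint_clears X b -> qint_clears X (a + b).
Proof.
move=> [Pa Ha] [Pb Hb]; exists (Pa + 'X^a * Pb).
by rewrite qintD !tofracD !tofracM -Ha -Hb; ring.
Qed.

Lemma qint_clearsMr X a k : qint_clears X a -> qint_clears X (a * k).
Proof.
move=> Ha; elim: k => [|k IH]; first by rewrite muln0; apply: qint_clears0.
by rewrite mulnS; apply: qint_clearsD.
Qed.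

Lemma qint_clears_sumn (l : seq nat) :
  qint_clears (qmultinom (size l) l / (qint (size l))%:F) (sumn l).
Proof.
rewrite sumnE -(sum_mults l id).
have : {subset undup l <= l} by move=> x; rewrite mem_undup.
elim: (undup l) => [|i u IH] sub_ul.
  by rewrite big_nil; apply: qint_clears0.
rewrite big_cons mulnC; apply: qint_clearsD.
  by apply/qint_clearsMr/qpoly_qint_count_qmultinom/sub_ul; rewrite mem_head.
by apply: IH => x ux; apply: sub_ul; rewrite inE ux orbT.
Qed.

Lemma size_le_sumn (l : seq nat) :
  all (fun x => 0 < x)%N l -> (size l <= sumn l)%N.
Proof.
elim: l => [//|a l IH] /= /andP [a_gt0 /IH le_size_sum].
by rewrite -add1n leq_add.
Qed.

Lemma is_par_size {N k} {l : seq nat} : is_par N k l -> size l = k.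
Proof. by case/and4P => _ _ /eqP. Qed.

Lemma is_par_sumn {N k} {l : seq nat} : is_par N k l -> sumn l = N.
Proof. by case/and4P => _ _ _ /eqP. Qed.

Lemma is_par_leq {N k} {l : seq nat} : is_par N k l -> (k <= N)%N.
Proof.
move=> par_l; case/and4P: (par_l) => _ pos_l _ _.
by rewrite -(is_par_size par_l) -(is_par_sumn par_l) size_le_sumn.
Qed.

Theorem proposition2p8 (n m c r s R S : nat)
  (alpha beta lambda mu : seq nat) :
  (0 < n)%N -> (0 < m)%N -> (0 < c)%N ->
  (R <= n)%N -> (S <= m)%N ->
  is_par R r alpha -> is_par S s beta ->
  is_par (n - R) c lambda -> is_par (m - S) c mu ->
  exists P : {poly int},
    (qint ((n - R) * (m - S)))%:F / (qint c)%:F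
      * qbinom n r * qbinom m s
      * qmultinom r alpha * qmultinom s beta
      * qmultinom c lambda * qmultinom c mu
    = P%:F.
Proof.
move=> _ _ _ leRn leSm par_alpha par_beta par_lambda par_mu.
have [P clearP] :
    qint_clears (qmultinom c lambda / (qint c)%:F) ((n - R) * (m - S)).
  rewrite -(is_par_size par_lambda) -{1}(is_par_sumn par_lambda).
  exact/qint_clearsMr/qint_clears_sumn.
rewrite (qbinomE (leq_trans (is_par_leq par_alpha) leRn)).
rewrite (qbinomE (leq_trans (is_par_leq par_beta) leSm)).
rewrite (qmultinomE (is_par_size par_alpha)) (qmultinomE (is_par_size par_beta)).
rewrite (qmultinomE (is_par_size par_mu)).
exists (P * gauss_poly n r * gauss_poly m s * multinom_poly (mults alpha)
          * multinom_poly (mults beta) * multinom_poly (mults mu)).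
by rewrite !tofracM -clearP; ring.
Qed.
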